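(* Let $k,l$ be positive integers and put $a=3k-2$, $b=3l-2$. For every cell $c$ of the Aztec rectangle $\mathcal{AR}_{a,b}$, the region $\mathcal{AR}_{a,b}$ with the single defect $c$ has a cover by L-trominoes, i.e. $\mathcal{AR}_{a,b}\setminus\{c\}$ can be partitioned into L-trominoes.
   Context: A cell is a unit square $[i,i+1]\times[j,j+1]$ with $i,j\in\mathbb{Z}$, labelled $(i,j)$. An L-tromino is a set of three cells equal to a $2\times 2$ block of cells with one cell removed. A defect is a cell of a region that must not be covered. A cover of a region $R$ with defect set $D$ is a set of pairwise disjoint L-trominoes, each contained in $R\setminus D$, whose union is $R\setminus D$. For positive integers $a,b$, the Aztec rectangle $\mathcal{AR}_{a,b}$ is (up to translation) the region consisting of the cells $(i,j)\in\mathbb{Z}^2$ with $0\le i+j\le 2b$ and $1\le j-i\le 2a+1$; it has $a$ cells along its southwestern side and $b$ cells along its northwestern side. *)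

From Stdlib Require Import ZArith List.
Open Scope Z_scope.

(* A cell (i,j) is the unit square [i,i+1]x[j,j+1]. *)
Definition cell := (Z * Z)%type.

Definition region := cell -> Prop.

Definition in_block (x y : Z) (c : cell) : Prop :=
  x <= fst c <= x + 1 /\ y <= snd c <= y + 1.

(* An L-tromino: a 2x2 block of cells with one cell removed.
   [tro_x],[tro_y] is the lower-left cell of the block; the removed cell is
   (tro_x + tro_dx, tro_y + tro_dy) with tro_dx, tro_dy in {0,1}. *)
Record tromino := Tromino { tro_x : Z; tro_y : Z; tro_dx : bool; tro_dy : bool }.

Definition b2z (b : bool) : Z := if b then 1 else 0.

Definition tro_cells (t : tromino) : region := fun c =>
  in_block (tro_x t) (tro_y t) c /\
  c <> (tro_x t + b2z (tro_dx t), tro_y t + b2z (tro_dy t)).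

Definition is_cover (R D : region) (T : list tromino) : Prop :=
  (forall i j, (i < length T)%nat -> (j < length T)%nat -> i <> j ->
     forall c, tro_cells (nth i T (Tromino 0 0 false false)) c ->
               ~ tro_cells (nth j T (Tromino 0 0 false false)) c) /\
  (forall t, In t T -> forall c, tro_cells t c -> R c /\ ~ D c) /\
  (forall c, R c -> ~ D c -> exists t, In t T /\ tro_cells t c).

Definition has_cover (R D : region) : Prop := exists T, is_cover R D T.

Definition aztec_rect (a b : Z) : region := fun c =>
  0 <= fst c + snd c <= 2 * b /\ 1 <= snd c - fst c <= 2 * a + 1.

(* In the coordinates u = i + j, v = j - i a cell is a lattice point with u = v (mod 2), and
   the Aztec rectangle AR_{a,b} becomes the box [0, 2b] x [1, 2a + 1].  Two consecutive
   u-diagonals restricted to three consecutive v-values form an L-tromino, so when 3 divides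
   2a + 1 every band of two u-diagonals is tiled.  Split the u-range into such bands and one
   band of three u-diagonals containing the defect.  The latter splits in the v-direction into
   pairs of v-diagonals, again L-trominoes, and one 3 x 3 box containing the defect; that box
   holds exactly a 2 x 2 block of cells, which minus the defect is an L-tromino. *)
From Stdlib Require Import ZArith List Lia.
Open Scope Z_scope.

Definition tiles (S : region) (T : list tromino) : Prop :=
  (forall i j, (i < length T)%nat -> (j < length T)%nat -> i <> j ->
     forall c, tro_cells (nth i T (Tromino 0 0 false false)) c ->
               ~ tro_cells (nth j T (Tromino 0 0 false false)) c) /\
  (forall t, In t T -> forall c, tro_cells t c -> S c) /\
  (forall c, S c -> exists t, In t T /\ tro_cells t c).

Definition tileable (S : region) : Prop := exists T, tiles S T.

Lemma has_cover_of_tileable (R D : region) :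
  tileable (fun c => R c /\ ~ D c) -> has_cover R D.
Proof.
intros [T [Hdisj [Hsub Hcov]]]. exists T. split; [exact Hdisj | split].
- exact Hsub.
- intros c HR HD. exact (Hcov c (conj HR HD)).
Qed.

Lemma tileable_ext (S S' : region) :
  (forall c, S c <-> S' c) -> tileable S -> tileable S'.
Proof.
intros HS [T [Hdisj [Hsub Hcov]]]. exists T. split; [exact Hdisj | split].
- intros t Ht c Hc. apply HS. exact (Hsub t Ht c Hc).
- intros c Hc. apply Hcov, HS, Hc.
Qed.

Lemma tileable_empty (S : region) : (forall c, ~ S c) -> tileable S.
Proof.
intros HS. exists nil. split; [| split].
- intros i j Hi. simpl in Hi. lia.
- intros t [].
- intros c Hc. exfalso. exact (HS c Hc).
Qed.

Lemma tileable_tromino (S : region) (t : tromino) :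
  (forall c, S c <-> tro_cells t c) -> tileable S.
Proof.
intros HS. exists (t :: nil). split; [| split].
- intros i j Hi Hj Hij. simpl in Hi, Hj. lia.
- intros t' [<- | []] c Hc. apply HS, Hc.
- intros c Hc. exists t. split; [left; reflexivity | apply HS, Hc].
Qed.

Lemma tileable_disjoint_union (S1 S2 S : region) :
  (forall c, S c <-> S1 c \/ S2 c) -> (forall c, S1 c -> ~ S2 c) ->
  tileable S1 -> tileable S2 -> tileable S.
Proof.
intros HS Hdisj12 [T1 [Hdisj1 [Hsub1 Hcov1]]] [T2 [Hdisj2 [Hsub2 Hcov2]]].
set (t0 := Tromino 0 0 false false).
assert (HT1 : forall i, (i < length T1)%nat -> forall c, tro_cells (nth i T1 t0) c -> S1 c)
  by (intros i Hi; apply Hsub1, nth_In, Hi).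
assert (HT2 : forall i, (i < length T2)%nat -> forall c, tro_cells (nth i T2 t0) c -> S2 c)
  by (intros i Hi; apply Hsub2, nth_In, Hi).
exists (T1 ++ T2). split; [| split].
- intros i j Hi Hj Hij c Hci Hcj. rewrite length_app in Hi, Hj.
  destruct (Nat.lt_ge_cases i (length T1)) as [Hi1 | Hi2];
  destruct (Nat.lt_ge_cases j (length T1)) as [Hj1 | Hj2].
  + rewrite app_nth1 in Hci, Hcj by lia. exact (Hdisj1 i j Hi1 Hj1 Hij c Hci Hcj).
  + rewrite app_nth1 in Hci by lia. rewrite app_nth2 in Hcj by lia.
    apply (Hdisj12 c); [exact (HT1 i Hi1 c Hci) | exact (HT2 (j - length T1)%nat ltac:(lia) c Hcj)].
  + rewrite app_nth2 in Hci by lia. rewrite app_nth1 in Hcj by lia.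
    apply (Hdisj12 c); [exact (HT1 j Hj1 c Hcj) | exact (HT2 (i - length T1)%nat ltac:(lia) c Hci)].
  + rewrite app_nth2 in Hci, Hcj by lia.
    exact (Hdisj2 (i - length T1)%nat (j - length T1)%nat ltac:(lia) ltac:(lia) ltac:(lia)
             c Hci Hcj).
- intros t Ht c Hc. apply HS.
  apply in_app_or in Ht as [Ht | Ht]; [left; exact (Hsub1 t Ht c Hc) | right; exact (Hsub2 t Ht c Hc)].
- intros c Hc. apply HS in Hc as [Hc | Hc];
    [destruct (Hcov1 c Hc) as [t [Ht Htc]] | destruct (Hcov2 c Hc) as [t [Ht Htc]]];
    exists t; split; [apply in_or_app; left | | apply in_or_app; right |]; assumption.
Qed.

Lemma tro_cellsE x y dx dy c :
  tro_cells (Tromino x y dx dy) c <->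
  x <= fst c <= x + 1 /\ y <= snd c <= y + 1 /\
  ~ (fst c = x + b2z dx /\ snd c = y + b2z dy).
Proof.
destruct c as [i j]; unfold tro_cells, in_block; simpl. split.
- intros [[Hx Hy] Hne]. repeat split; try lia. intros [-> ->]. apply Hne. reflexivity.
- intros [Hx [Hy Hne]]. split; [split; lia |].
  intros E. injection E as Ei Ej. apply Hne. split; assumption.
Qed.

Definition diag_rect (u1 u2 v1 v2 : Z) : region := fun c =>
  u1 <= fst c + snd c <= u2 /\ v1 <= snd c - fst c <= v2.

(* Coordinatewise rather than [c <> d], so that [lia] can reason about it. *)
Definition remove_cell (R : region) (d : cell) : region := fun c =>
  R c /\ ~ (fst c = fst d /\ snd c = snd d).

Lemma remove_cellE (R : region) d c : remove_cell R d c <-> R c /\ c <> d.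
Proof.
destruct c as [i j], d as [i' j']. unfold remove_cell. simpl. split.
- intros [HR Hne]. split; [exact HR |]. intros E. injection E as -> ->. tauto.
- intros [HR Hne]. split; [exact HR |]. intros [-> ->]. exact (Hne eq_refl).
Qed.

Lemma tileable_diag_rect_2x3 p q : tileable (diag_rect p (p + 1) q (q + 2)).
Proof.
destruct (Z.Even_or_Odd (p - q)) as [[m E] | [m E]].
- apply (tileable_tromino _ (Tromino (m - 1) (p - m) false false)).
  intros c. rewrite tro_cellsE. unfold diag_rect, b2z. simpl. lia.
- apply (tileable_tromino _ (Tromino m (p - m) true true)).
  intros c. rewrite tro_cellsE. unfold diag_rect, b2z. simpl. lia.
Qed.

Lemma tileable_diag_rect_3x2 p q : tileable (diag_rect p (p + 2) q (q + 1)).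
Proof.
destruct (Z.Even_or_Odd (p - q)) as [[m E] | [m E]].
- apply (tileable_tromino _ (Tromino m (p - m) true false)).
  intros c. rewrite tro_cellsE. unfold diag_rect, b2z. simpl. lia.
- apply (tileable_tromino _ (Tromino m (p - m) false true)).
  intros c. rewrite tro_cellsE. unfold diag_rect, b2z. simpl. lia.
Qed.

(* If p - q = 2m + 1, the box contains exactly the four cells of the 2 x 2 block with
   lower-left cell (m, p - m). *)
Lemma tileable_diag_box_remove_cell p q d :
  Z.odd (p - q) = true -> diag_rect p (p + 2) q (q + 2) d ->
  tileable (remove_cell (diag_rect p (p + 2) q (q + 2)) d).
Proof.
intros Hodd Hd. apply Z.odd_spec in Hodd as [m E].
apply (tileable_tromino _
  (Tromino m (p - m) (Z.eqb (fst d) (m + 1)) (Z.eqb (snd d) (p - m + 1)))).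
intros c. rewrite tro_cellsE. unfold remove_cell, diag_rect, b2z in *. simpl.
destruct (Z.eqb_spec (fst d) (m + 1)), (Z.eqb_spec (snd d) (p - m + 1)); lia.
Qed.

Lemma tileable_diag_rect_ustack v1 v2 w : 0 <= w ->
  (forall p, tileable (diag_rect p (p + w - 1) v1 v2)) ->
  forall u n, 0 <= n -> tileable (diag_rect u (u + w * n - 1) v1 v2).
Proof.
intros Hw Hstrip u n Hn. revert u. pattern n. apply natlike_ind; [| | exact Hn].
- intros u. apply tileable_empty. unfold diag_rect. lia.
- intros n' Hn' IH u. rewrite Z.mul_succ_r.
  apply (tileable_disjoint_union (diag_rect u (u + w - 1) v1 v2)
                                 (diag_rect (u + w) (u + w + w * n' - 1) v1 v2));
    [unfold diag_rect; lia .. | apply Hstrip | apply IH].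
Qed.

Lemma tileable_diag_rect_vstack u1 u2 w : 0 <= w ->
  (forall q, tileable (diag_rect u1 u2 q (q + w - 1))) ->
  forall v n, 0 <= n -> tileable (diag_rect u1 u2 v (v + w * n - 1)).
Proof.
intros Hw Hstrip v n Hn. revert v. pattern n. apply natlike_ind; [| | exact Hn].
- intros v. apply tileable_empty. unfold diag_rect. lia.
- intros n' Hn' IH v. rewrite Z.mul_succ_r.
  apply (tileable_disjoint_union (diag_rect u1 u2 v (v + w - 1))
                                 (diag_rect u1 u2 (v + w) (v + w + w * n' - 1)));
    [unfold diag_rect; lia .. | apply Hstrip | apply IH].
Qed.

Lemma tileable_diag_column_remove_cell p q a d :
  Z.odd (p - q) = true -> 0 <= a -> diag_rect p (p + 2) q (q + 2 * a + 2) d ->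
  tileable (remove_cell (diag_rect p (p + 2) q (q + 2 * a + 2)) d).
Proof.
intros Hodd Ha Hd.
set (t := Z.min ((snd d - fst d - q) / 2) a).
assert (Ht : 0 <= t <= a /\ q + 2 * t <= snd d - fst d <= q + 2 * t + 2).
{ unfold t, diag_rect in *. pose proof (Z.div_mod (snd d - fst d - q) 2).
  pose proof (Z.mod_pos_bound (snd d - fst d - q) 2). lia. }
assert (Hpairs := tileable_diag_rect_vstack p (p + 2) 2 ltac:(lia)).
specialize (Hpairs ltac:(intros q'; replace (q' + 2 - 1) with (q' + 1) by lia;
                          apply tileable_diag_rect_3x2)).
apply (tileable_disjoint_union (diag_rect p (p + 2) q (q + 2 * t - 1))
  (fun c => remove_cell (diag_rect p (p + 2) (q + 2 * t) (q + 2 * t + 2)) d c \/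
            diag_rect p (p + 2) (q + 2 * t + 3) (q + 2 * t + 3 + 2 * (a - t) - 1) c));
  [unfold remove_cell, diag_rect in *; lia .. | apply Hpairs; lia |].
apply (tileable_disjoint_union _ _ _ (fun c => iff_refl _));
  [unfold remove_cell, diag_rect in *; lia | | apply Hpairs; lia].
apply tileable_diag_box_remove_cell; [| unfold diag_rect in *; lia].
replace (p - (q + 2 * t)) with (p - q + 2 * (- t)) by lia.
rewrite Z.odd_add_mul_2. exact Hodd.
Qed.

Lemma tileable_aztec_rect_remove_cell a b d :
  1 <= a -> 1 <= b -> (3 | 2 * a + 1) -> aztec_rect a b d ->
  tileable (remove_cell (aztec_rect a b) d).
Proof.
intros Ha Hb [n En] Hd.
set (s := Z.min ((fst d + snd d) / 2) (b - 1)).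
assert (Hs : 0 <= s <= b - 1 /\ 2 * s <= fst d + snd d <= 2 * s + 2).
{ unfold s, aztec_rect in *. pose proof (Z.div_mod (fst d + snd d) 2).
  pose proof (Z.mod_pos_bound (fst d + snd d) 2). lia. }
assert (Hband : forall p, tileable (diag_rect p (p + 2 - 1) 1 (2 * a + 1))).
{ intros p. apply (tileable_ext (diag_rect p (p + 1) 1 (1 + 3 * n - 1)));
    [unfold diag_rect; lia |].
  apply tileable_diag_rect_vstack; [lia | | lia].
  intros q. replace (q + 3 - 1) with (q + 2) by lia. apply tileable_diag_rect_2x3. }
assert (Hbands := tileable_diag_rect_ustack _ _ 2 ltac:(lia) Hband).
apply (tileable_disjoint_union (diag_rect 0 (0 + 2 * s - 1) 1 (2 * a + 1))
  (fun c => remove_cell (diag_rect (2 * s) (2 * s + 2) 1 (2 * a + 1)) d c \/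
            diag_rect (2 * s + 3) (2 * s + 3 + 2 * (b - 1 - s) - 1) 1 (2 * a + 1) c));
  [unfold remove_cell, aztec_rect, diag_rect in *; lia .. | apply Hbands; lia |].
apply (tileable_disjoint_union _ _ _ (fun c => iff_refl _));
  [unfold remove_cell, diag_rect in *; lia | | apply Hbands; lia].
replace (2 * a + 1) with (1 + 2 * (a - 1) + 2) by lia.
apply tileable_diag_column_remove_cell;
  [now rewrite Z.odd_sub, Z.odd_mul | lia | unfold aztec_rect, diag_rect in *; lia].
Qed.

Theorem theorem2 (k l : Z) (hk : 1 <= k) (hl : 1 <= l) (c : cell) :
  aztec_rect (3 * k - 2) (3 * l - 2) c ->
  has_cover (aztec_rect (3 * k - 2) (3 * l - 2)) (fun d => d = c).
Proof.
intros Hc.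
assert (Hdiv : (3 | 2 * (3 * k - 2) + 1)) by (exists (2 * k - 1); lia).
apply has_cover_of_tileable.
apply (tileable_ext (remove_cell (aztec_rect (3 * k - 2) (3 * l - 2)) c)).
- intros d. apply remove_cellE.
- apply tileable_aztec_rect_remove_cell; [lia | lia | exact Hdiv | exact Hc].
Qed.
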